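(* The sum $\oplus$ and the trace operator $\mathrm{tr}$ of $\mathcal M_{\max\star}(\mathbb S^{\mathrm{m},\mathbb P}_r)$ are monotone with respect to the orders $\le_{\mathcal M}$ on its hom-sets.
   Context: Notation: $[k]=\{1,\dots,k\}$; $T(X)=X+\mathbb R\times X+\{\exists^*,\forall^*\}$; diagrammatic composition. $\mathbb S^{\mathrm{m},\mathbb P}_r$: objects natural numbers; arrows $f:m\to n$ are functions $[m]\to T([n])$ such that for all $i\ne j$, $f(i)\notin[n]$ or $f(j)\notin\{f(i)\}\cup\mathbb R\times\{f(i)\}$; hom-sets ordered pointwise by the least order on $T([n])$ with $(r_1,i)\le(r_2,i)$ if $r_1\ge r_2$, $\exists^*\le z$, $z\le\forall^*$. Operations: $(f;g)(i)=f(i)$ if $f(i)\in\{\exists^*,\forall^*\}$; $g(j)$ if $f(i)=j$; $g(j)$ if $f(i)=(r,j)$, $g(j)\in\{\exists^*,\forall^*\}$; $(r,k)$ if $f(i)=(r,j)$, $g(j)=k$; $(r+r',k)$ if $f(i)=(r,j)$, $g(j)=(r',k)$. $(f\oplus g)(i)=f(i)$ ($i\le m$), $(f\oplus g)(m+i)$ is $g(i)$ with its index $j$ (if any) shifted to $n+j$. Trace of $f:l+m\to l+n$ at $i\in[m]$: $v_0=l+i$; if $j=0$ or $v_j\in[l]$, $v_{j+1}=f(v_j)$; if $v_j=(r,k)$, $k\in[l]$, $v_{j+1}=f(k)$; otherwise stop. If finite $(v_0..v_K)$ with $S$ the sum of first components of $v_j\in\mathbb R\times[l+n]$ ($1\le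 j\le K$): $v_K$ if $v_K\in\{\exists^*,\forall^*\}$; $k$ if $v_K=l+k$ and $v_j\in[l]$ for $1\le j<K$; $(S,k)$ if $v_K=l+k$ and some earlier $v_j\in\mathbb R\times[l]$; $(S,k)$ if $v_K=(r,l+k)$. If infinite, with $w'_t$ the first components of the (infinitely many) entries in $\mathbb R\times[l]$: $\exists^*$ if $\liminf_N\frac1N\sum_{t\le N}w'_t\ge0$, else $\forall^*$. For a poset $X$, $\mathcal M(X)$ is the set of nonempty finite subsets of pairwise incomparable elements, ordered by $S\le_{\mathcal M}T$ iff every $x\in S$ has some $y\in T$ with $x\le y$; $S^{\circ}$ is the set of maximal elements of $S$. $\mathcal M_{\max\star}(\mathbb S^{\mathrm{m},\mathbb P}_r)$ has objects natural numbers and arrows $m\to n$ the elements of $\mathcal M(\mathbb S^{\mathrm{m},\mathbb P}_r(m,n))$, with $S;T=\{f;g\mid f\in S,g\in T\}^{\circ}$, $S\oplus T=\{f\oplus g\mid f\in S,g\in T\}^{\circ}$, $\mathrm{tr}^l_{m,n}(S)=\{\mathrm{tr}^l_{m,n}(f)\mid f\in S\}^{\circ}$. *)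

From HB Require Import structures.
From mathcomp Require Import all_boot all_order all_algebra.
From mathcomp Require Import classical_sets boolp cardinality reals ereal sequences.
Set Implicit Arguments. Unset Strict Implicit. Unset Printing Implicit Defensive.
Import Order.TTheory GRing.Theory Num.Theory.
Local Open Scope classical_set_scope.
Local Open Scope ring_scope.

Section Sm.
Variable R : realType.

(* T([n]) = [n] + R x [n] + {exists*, forall*}; indices are 0-based ('I_n). *)
Inductive Tm (n : nat) : Type :=
| Ix of 'I_n
| Wt of R & 'I_n
| Ex
| Al.

Arguments Ex {n}. Arguments Al {n}.

Definition arrow (m n : nat) := 'I_m -> Tm n.

Definition wf_arrow m n (f : arrow m n) : Prop :=
  forall i j : 'I_m, i <> j -> forall k : 'I_n,
    f i = Ix k -> f j <> Ix k /\ (forall r : R, f j <> Wt r k).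

Definition leT n (x y : Tm n) : Prop :=
  x = y \/ x = Ex \/ y = Al \/
  exists (i : 'I_n) (r1 r2 : R), x = Wt r1 i /\ y = Wt r2 i /\ r2 <= r1.

Definition leA m n (f g : arrow m n) : Prop := forall i, leT (f i) (g i).

Definition mapT n n' (h : 'I_n -> 'I_n') (x : Tm n) : Tm n' :=
  match x with
  | Ix k => Ix (h k)
  | Wt r k => Wt r (h k)
  | Ex => Ex
  | Al => Al
  end.

Definition sumA m n m' n' (f : arrow m n) (g : arrow m' n') : arrow (m + m') (n + n') :=
  fun i => match split i with
           | inl a => mapT (@lshift n n') (f a)
           | inr b => mapT (@rshift n n') (g b)
           end.

Section Trace.
Variables l m n : nat.
Variable f : arrow (l + m) (l + n).

Definition tstep (v : Tm (l + n)) : option (Tm (l + n)) :=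
  match v with
  | Ix k | Wt _ k => match split k with
                     | inl a => Some (f (lshift m a))
                     | inr _ => None
                     end
  | _ => None
  end.

(* twalk i j = v_{j+1} (None once the sequence has stopped) *)
Fixpoint twalk (i : 'I_m) (j : nat) : option (Tm (l + n)) :=
  match j with
  | 0 => Some (f (rshift l i))
  | j'.+1 => obind tstep (twalk i j')
  end.

Definition isWt (o : option (Tm (l + n))) : bool :=
  if o is Some (Wt _ _) then true else false.

Definition weightT (o : option (Tm (l + n))) : R :=
  if o is Some (Wt r _) then r else 0.

Definition tfinite (i : 'I_m) : Prop := exists j, twalk i j = None.

(* position K-1 of the last entry v_K (when finite) *)
Definition tlast (i : 'I_m) : nat :=
  xget 0%N [set K | twalk i K <> None /\ twalk i K.+1 = None].

Definition wcount (i : 'I_m) (j : nat) : nat := \sum_(k < j) isWt (twalk i k).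

(* w'_t (0-based): weight of the (t+1)-th entry of the sequence lying in R x [l] *)
Definition wpos (i : 'I_m) (t : nat) : nat :=
  xget 0%N [set j | isWt (twalk i j) /\ wcount i j = t].
Definition wprime (i : 'I_m) (t : nat) : R := weightT (twalk i (wpos i t)).

(* (1/N) sum_{t <= N} w'_t, N >= 1 (value at N = 0 irrelevant for liminf) *)
Definition wavg (i : 'I_m) (N : nat) : \bar R :=
  (if N is 0 then 0 else (N%:R)^-1 * \sum_(t < N) wprime i t)%:E.

Definition trace_at (i : 'I_m) : Tm n :=
  if pselect (tfinite i) then
    let K := tlast i in
    let vK := if twalk i K is Some v then v else Ex in
    let S := \sum_(j < K.+1) weightT (twalk i j) in
    let earlierW := [exists j : 'I_K, isWt (twalk i j)] in
    match vK with
    | Ex => Ex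
    | Al => Al
    | Ix k => match split k with
              | inr k' => if earlierW then Wt S k' else Ix k'
              | inl _ => Ex (* impossible: the sequence would not stop *)
              end
    | Wt _ k => match split k with
                | inr k' => Wt S k'
                | inl _ => Ex (* impossible *)
                end
    end
  else
    if (0 <= limn_einf (wavg i))%E then Ex else Al.

End Trace.

Definition trA l m n (f : arrow (l + m) (l + n)) : arrow m n :=
  fun i => trace_at f i.

Definition isM m n (S : set (arrow m n)) : Prop :=
  S !=set0 /\ finite_set S /\ (forall f, S f -> wf_arrow f) /\
  (forall f g, S f -> S g -> f <> g -> ~ leA f g).

Definition leM m n (S T : set (arrow m n)) : Prop :=
  forall f, S f -> exists2 g, T g & leA f g.

Definition maxel m n (S : set (arrow m n)) : set (arrow m n) :=
  [set f | S f /\ forall g, S g -> leA f g -> g = f].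

Definition sumM m n m' n' (S : set (arrow m n)) (T : set (arrow m' n')) :
  set (arrow (m + m') (n + n')) :=
  maxel [set h | exists2 f, S f & exists2 g, T g & h = sumA f g].

Definition trM l m n (S : set (arrow (l + m) (l + n))) : set (arrow m n) :=
  maxel [set h | exists2 f, S f & h = trA f].

End Sm.
Arguments Ex {R n}. Arguments Al {R n}.

From HB Require Import structures.
From mathcomp Require Import all_boot all_order all_algebra.
From mathcomp Require Import classical_sets boolp cardinality reals ereal sequences.
From mathcomp Require Import topology normedtype.
Set Implicit Arguments. Unset Strict Implicit. Unset Printing Implicit Defensive.
Import Order.TTheory GRing.Theory Num.Theory.
Local Open Scope classical_set_scope.
Local Open Scope ring_scope.

(* Both operations act elementwise on representatives and then keep the
   maximal elements. For the trace,
   if f <= f' pointwise then either the walk of f reaches exists* or the walk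
   of f' reaches forall* (and the two traces are the extreme values), or the
   two walks visit the same indices step by step, f' carrying smaller weights;
   the traces then have the same shape with a smaller accumulated weight, or a
   smaller liminf of mean weights. Finally, in a finite poset every element
   lies below a maximal one, so keeping maximal elements preserves <=_M. *)

Lemma le_limn_einf (R : realType) (u v : (\bar R)^nat) :
  (forall n, (u n <= v n)%E) -> (limn_einf u <= limn_einf v)%E.
Proof.
move=> le_uv; rewrite !limn_einf_lim; apply: lee_lim; [exact: is_cvg_einfs..|].
apply: nearW => n /=; apply: le_ereal_inf_tmp => _ [k nk <-].
by apply: le_trans (le_uv k); apply: ereal_inf_lbound; exists k.
Qed.

Lemma finite_maximal_above T (le : T -> T -> Prop) (A : set T) :
  (forall x y z, le x y -> le y z -> le x z) ->
  (forall x y, le x y -> le y x -> x = y) ->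
  finite_set A -> forall x y, A y -> le x y ->
  exists2 g, A g & le x g /\ (forall h, A h -> le g h -> h = g).
Proof.
elim/Pchoice: T => T in le A *; move=> le_tr le_antisym /finite_seqP[s ->] {A}.
elim: s => [//|a s IH] x y /= ys xy.
have [[y' y's xy']|above_x_only_a] := pselect (exists2 y', y' \in s & le x y').
  have [g gs [xg g_max]] := IH x y' y's xy'.
  have [ga|nga] := pselect (le g a).
    exists a; first by rewrite inE eqxx.
    split=> [|h]; first exact: le_tr xg ga.
    rewrite inE => /orP[/eqP-> //|hs] ah.
    by have /= hg := g_max h hs (le_tr _ _ _ ga ah); subst h; apply: le_antisym.
  exists g; first by rewrite inE gs orbT.
  split=> // h; rewrite inE => /orP[/eqP-> //|]; exact: g_max.
have xa : le x a.
  by move: ys; rewrite inE => /orP[/eqP<- //|ys]; exfalso; apply: above_x_only_a; exists y.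
exists a; first by rewrite inE eqxx.
split=> // h; rewrite inE => /orP[/eqP-> //|hs] ah.
by exfalso; apply: above_x_only_a; exists h => //; apply: le_tr xa ah.
Qed.

Section Order.
Variable R : realType.

Lemma leT_refl n (x : Tm R n) : leT x x.
Proof. by left. Qed.

Lemma Ex_leT n (x : Tm R n) : leT Ex x.
Proof. by right; left. Qed.

Lemma leT_Al n (x : Tm R n) : leT x Al.
Proof. by right; right; left. Qed.

Lemma leT_Wt n (r r' : R) (k : 'I_n) : r' <= r -> leT (Wt r k) (Wt r' k).
Proof. by move=> r'r; right; right; right; exists k, r, r'. Qed.

Lemma leT_trans n (x y z : Tm R n) : leT x y -> leT y z -> leT x z.
Proof.
move=> [-> //|[->|[->|[i [r1 [r2 [-> [-> r21]]]]]]]]; first by move=> _; apply: Ex_leT.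
  by move=> [<-|[//|[->|[? [? [? [//]]]]]]]; apply: leT_Al.
move=> [<-|[//|[->|[j [r2' [r3 [[<- <-] [-> r32]]]]]]]].
- exact: leT_Wt.
- exact: leT_Al.
- by apply: leT_Wt; apply: le_trans r21.
Qed.

Lemma leT_anti n (x y : Tm R n) : leT x y -> leT y x -> x = y.
Proof.
move=> [-> //|[->|[->|[i [r1 [r2 [-> [-> r21]]]]]]]].
- by move=> [|[|[|[? [? [? [_ []]]]]]]].
- by move=> [|[|[|[? [? [? []]]]]]].
move=> [[->] //|[//|[//|[j [r2' [r1' [[<- _] [[<- _] r12]]]]]]]].
by congr Wt; apply/eqP; rewrite eq_le r21 r12.
Qed.

Lemma leT_map n n' (h : 'I_n -> 'I_n') (x y : Tm R n) :
  leT x y -> leT (mapT h x) (mapT h y).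
Proof.
move=> [->|[->|[->|[i [r1 [r2 [-> [-> r21]]]]]]]].
- exact: leT_refl.
- exact: Ex_leT.
- exact: leT_Al.
- exact: leT_Wt.
Qed.

Lemma leA_trans m n (f g h : arrow R m n) : leA f g -> leA g h -> leA f h.
Proof. by move=> fg gh i; apply: leT_trans (fg i) (gh i). Qed.

Lemma leA_anti m n (f g : arrow R m n) : leA f g -> leA g f -> f = g.
Proof. by move=> fg gf; apply/funext => i; apply: leT_anti. Qed.

Lemma sumA_mono m n m' n' (f f' : arrow R m n) (g g' : arrow R m' n') :
  leA f f' -> leA g g' -> leA (sumA f g) (sumA f' g').
Proof. by move=> ff' gg' i; rewrite /sumA; case: split => a; apply: leT_map. Qed.

Lemma leM_maxel m n (A B : set (arrow R m n)) :
  finite_set B -> leM A B -> leM (maxel A) (maxel B).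
Proof.
move=> finB leAB f [Af _]; have [g Bg fg] := leAB f Af.
have [h Bh [fh h_max]] :=
  finite_maximal_above (@leA_trans m n) (@leA_anti m n) finB Bg fg.
by exists h.
Qed.

End Order.

Section Walk.
Variables (R : realType) (l m n : nat).
Implicit Types (f : arrow R (l + m) (l + n)) (o : option (Tm R (l + n))).

Lemma twalk_stop f i j :
  twalk f i j <> None -> twalk f i j.+1 = None -> tfinite f i /\ tlast f i = j.
Proof.
move=> walk_j stop_j; split; first by exists j.+1.
have None_after d k : twalk f i k = None -> twalk f i (k + d) = None.
  by move=> stop_k; elim: d => [|d IH]; rewrite ?addn0 ?addnS //= IH.
apply: xget_unique => // K [walk_K stop_K].
have [ltKj|ltjK|//] := ltngtP K j; exfalso.
- by apply: walk_j; rewrite -(subnKC ltKj); apply: None_after.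
- by apply: walk_K; rewrite -(subnKC ltjK); apply: None_after.
Qed.

Lemma trace_at_Ex f i j : twalk f i j = Some Ex -> trace_at f i = Ex.
Proof.
move=> walk_j; have [fin last_j] : tfinite f i /\ tlast f i = j.
  by apply: twalk_stop; rewrite /= walk_j.
by rewrite /trace_at; case: pselect => // ?; rewrite last_j walk_j.
Qed.

Lemma trace_at_Al f i j : twalk f i j = Some Al -> trace_at f i = Al.
Proof.
move=> walk_j; have [fin last_j] : tfinite f i /\ tlast f i = j.
  by apply: twalk_stop; rewrite /= walk_j.
by rewrite /trace_at; case: pselect => // ?; rewrite last_j walk_j.
Qed.

Definition wle o o' : Prop :=
  o = o' \/ exists k (r r' : R), [/\ o = Some (Wt r k), o' = Some (Wt r' k) & r' <= r].

Lemma wle_None o o' : wle o o' -> (o = None <-> o' = None).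
Proof. by move=> [->|[k [r [r' [-> -> _]]]]]. Qed.

Lemma isWt_wle o o' : wle o o' -> isWt o = isWt o'.
Proof. by move=> [->|[k [r [r' [-> -> _]]]]]. Qed.

Lemma weightT_wle o o' : wle o o' -> weightT o' <= weightT o.
Proof. by move=> [->|[k [r [r' [-> -> //]]]]]. Qed.

Section Compare.
Variables f f' : arrow R (l + m) (l + n).
Hypothesis le_ff' : leA f f'.

Lemma leT_wle (x y : Tm R (l + n)) :
  leT x y -> wle (Some x) (Some y) \/ x = Ex \/ y = Al.
Proof.
move=> [->|[->|[->|[k [r [r' [-> [-> r'r]]]]]]]]; [by left; left|by right; left|..].
  by right; right.
by left; right; exists k, r, r'.
Qed.

Lemma wle_tstep o o' : wle o o' ->
  [\/ wle (obind (tstep f) o) (obind (tstep f') o'),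
      obind (tstep f) o = Some Ex | obind (tstep f') o' = Some Al].
Proof.
have step_Ix (k : 'I_(l + n)) : [\/ wle (tstep f (Ix R k)) (tstep f' (Ix R k)),
    tstep f (Ix R k) = Some Ex | tstep f' (Ix R k) = Some Al].
  rewrite /=; case: split => a; last by apply: Or31; left.
  by have [|[->|->]] := leT_wle (le_ff' (lshift m a)); [apply: Or31|apply: Or32|apply: Or33].
move=> [<-|[k [r [r' [-> -> _]]]]]; last exact: step_Ix.
by case: o => [[k|r k||]|] /=; try exact: step_Ix; apply: Or31; left.
Qed.

Lemma twalk_wle i j :
  [\/ exists j0, twalk f i j0 = Some Ex, exists j0, twalk f' i j0 = Some Al
    | wle (twalk f i j) (twalk f' i j)].
Proof.
elim: j => [|j [||/wle_tstep[]]] /=; [|by apply: Or31|by apply: Or32|by apply: Or33|..].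
- have [|[|]] := leT_wle (le_ff' (rshift l i)); first by apply: Or33.
    by move=> walk0; apply: Or31; exists 0%N; rewrite /= walk0.
  by move=> walk0; apply: Or32; exists 0%N; rewrite /= walk0.
- by move=> stepE; apply: Or31; exists j.+1.
- by move=> stepA; apply: Or32; exists j.+1.
Qed.

End Compare.

Section SameWalk.
Variables (f f' : arrow R (l + m) (l + n)) (i : 'I_m).
Hypothesis walk_wle : forall j, wle (twalk f i j) (twalk f' i j).

Lemma tfinite_wle : tfinite f i <-> tfinite f' i.
Proof. by split=> -[j stop_j]; exists j; apply/(wle_None (walk_wle j)). Qed.

Lemma tlast_wle : tlast f' i = tlast f i.
Proof.
rewrite /tlast; congr xget; apply/funext => K; apply/propext.
by have := wle_None (walk_wle K); have := wle_None (walk_wle K.+1); rewrite /=; tauto.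
Qed.

Lemma wavg_wle N : (wavg f' i N <= wavg f i N)%E.
Proof.
have wcount_eq j : wcount f' i j = wcount f i j.
  by apply: eq_bigr => k _; rewrite (isWt_wle (walk_wle k)).
have wpos_eq t : wpos f' i t = wpos f i t.
  rewrite /wpos; congr xget; apply/funext => j /=; apply/propext.
  by rewrite wcount_eq (isWt_wle (walk_wle j)).
case: N => [|N]; rewrite /wavg lee_fin //.
rewrite ler_wpM2l ?invr_ge0 // ler_sum // => t _.
by rewrite /wprime wpos_eq; apply: weightT_wle.
Qed.

Lemma trace_at_wle : leT (trace_at f i) (trace_at f' i).
Proof.
rewrite /trace_at; case: pselect => fin; case: pselect => fin' /=;
  try by exfalso; have := tfinite_wle; tauto.
- rewrite tlast_wle; set K := tlast f i.
  have -> : [exists j : 'I_K, isWt (twalk f' i j)] = [exists j : 'I_K, isWt (twalk f i j)].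
    by apply: eq_existsb => j; rewrite (isWt_wle (walk_wle j)).
  have : \sum_(j < K.+1) weightT (twalk f' i j) <= \sum_(j < K.+1) weightT (twalk f i j).
    by apply: ler_sum => j _; apply: weightT_wle.
  move: (\sum_(j < K.+1) _) (\sum_(j < K.+1) _) [exists j : 'I_K, _] (walk_wle K).
  move=> S S' b [<-|[k [r [r' [-> -> _]]]]] S'S; last first.
    by case: split => a; [apply: leT_refl|apply: leT_Wt].
  case: (twalk f i K) => [[k|r k||]|] /=; try exact: leT_refl;
    case: split => a; try exact: leT_refl; last exact: leT_Wt.
  by case: b; [apply: leT_Wt|apply: leT_refl].
- have le_liminf := le_limn_einf wavg_wle.
  case: ifPn => limf; case: ifPn => limf'; try exact: leT_refl.
    exact: leT_Al.
  by move: limf; rewrite (le_trans limf' le_liminf).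
Qed.

End SameWalk.

Lemma trace_at_mono (f f' : arrow R (l + m) (l + n)) i :
  leA f f' -> leT (trace_at f i) (trace_at f' i).
Proof.
move=> le_ff'.
have [[j walkE]|noE] := pselect (exists j, twalk f i j = Some Ex).
  by rewrite (trace_at_Ex walkE); apply: Ex_leT.
have [[j walkA]|noA] := pselect (exists j, twalk f' i j = Some Al).
  by rewrite (trace_at_Al walkA); apply: leT_Al.
by apply: trace_at_wle => j; have [] := twalk_wle le_ff' i j.
Qed.

End Walk.

Lemma trA_mono (R : realType) l m n (f f' : arrow R (l + m) (l + n)) :
  leA f f' -> leA (trA f) (trA f').
Proof. by move=> le_ff' i; apply: trace_at_mono. Qed.

Section Monotone.
Variable R : realType.

Lemma sumM_mono m n m' n' (S1 S2 : set (arrow R m n)) (T1 T2 : set (arrow R m' n')) :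
  finite_set S2 -> finite_set T2 -> leM S1 S2 -> leM T1 T2 ->
  leM (sumM S1 T1) (sumM S2 T2).
Proof.
move=> finS2 finT2 leS leT; apply: leM_maxel.
  rewrite [X in finite_set X](_ : _ = (fun p => sumA p.1 p.2) @` (S2 `*` T2)).
    exact/finite_image/finite_setX.
  apply/seteqP; split=> x; first by move=> [f S2f [g T2g ->]]; exists (f, g).
  by move=> [[f g] [/= S2f T2g] <-]; exists f => //; exists g.
move=> _ [f S1f [g T1g ->]].
have [f' S2f' ff'] := leS f S1f; have [g' T2g' gg'] := leT g T1g.
by exists (sumA f' g'); [exists f' => //; exists g'|apply: sumA_mono].
Qed.

Lemma trM_mono l m n (S1 S2 : set (arrow R (l + m) (l + n))) :
  finite_set S2 -> leM S1 S2 -> leM (trM S1) (trM S2).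
Proof.
move=> finS2 leS; apply: leM_maxel.
  rewrite [X in finite_set X](_ : _ = (@trA R l m n) @` S2); first exact: finite_image.
  by apply/seteqP; split=> x [f S2f def_x]; exists f.
move=> _ [f S1f ->]; have [f' S2f' ff'] := leS f S1f.
by exists (trA f'); [exists f'|apply: trA_mono].
Qed.

End Monotone.

Theorem propositionD16 (R : realType) :
  (forall (m n m' n' : nat) (S1 S2 : set (arrow R m n)) (T1 T2 : set (arrow R m' n')),
      isM S1 -> isM S2 -> isM T1 -> isM T2 ->
      leM S1 S2 -> leM T1 T2 ->
      leM (sumM S1 T1) (sumM S2 T2)) /\
  (forall (l m n : nat) (S1 S2 : set (arrow R (l + m) (l + n))),
      isM S1 -> isM S2 -> leM S1 S2 ->
      leM (trM S1) (trM S2)).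
Proof.
split.
- move=> m n m' n' S1 S2 T1 T2 _ [_ [finS2 _]] _ [_ [finT2 _]].
  exact: sumM_mono.
- move=> l m n S1 S2 _ [_ [finS2 _]].
  exact: trM_mono.
Qed.
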